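(* Let $F$ be an abstract argumentation framework, let $\alpha_0(X,Y,Z)=X\cup Y$, and let $\beta_0(G,S)=1$ if $\mathrm{IS}^u(G)\cup\mathrm{IS}^{uc}(G)=\emptyset$ and $\beta_0(G,S)=0$ otherwise. For every $E$ with $(F,\emptyset)\leadsto^{\alpha_0,\beta_0}(F',E)$ for some $F'$: (1) $E\subseteq E'$ for some preferred extension $E'$ of $F$, and (2) $E_{id}\subseteq E$, where $E_{id}$ is the ideal extension of $F$.
   Context: An abstract argumentation framework (AF) is a pair $F=(A,R)$ with $A$ a finite set of arguments and $R\subseteq A\times A$ ($a\to b$ means $(a,b)\in R$). For $S\subseteq A$: $S^+=\{a\mid \exists b\in S: b\to a\}$, $S^-=\{a\mid\exists b\in S: a\to b\}$; for sets $S,S'$, $S\to S'$ means $S^+\cap S'\neq\emptyset$. $S$ is admissible if it is conflict-free and every attacker of an element of $S$ is attacked by some element of $S$. A preferred extension is an inclusion-maximal admissible set; the ideal extension is the inclusion-maximal admissible set contained in every preferred extension. An initial set is a non-empty admissible set with no non-empty admissible proper subset; $\mathrm{IS}(G)$ is the set of initial sets of $G$. An initial set $S$ is unattacked if $S^-=\emptyset$; unchallenged if $S^-\neq\emptyset$ and no $S'\in\mathrm{IS}(G)$ has $S'\to S$; challenged if some $S'\in\mathrm{IS}(G)$ has $S'\to S$. Write $\mathrm{IS}^{u}(G),\mathrm{IS}^{uc}(G),\mathrm{IS}^{c}(G)$ for these sets. The reduct is $G^S=(A',R\cap(A'\times A'))$ with $A'=A\setminus(S\cup S^+)$. Given a selection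 function $\alpha$ (mapping three sets $X,Y,Z$ of sets of arguments to a subset of $X\cup Y\cup Z$), transitions are $(G,S)\to(G^{S'},S\cup S')$ whenever $S'\in\alpha(\mathrm{IS}^u(G),\mathrm{IS}^{uc}(G),\mathrm{IS}^c(G))$. For a termination function $\beta$ (mapping pairs (AF, set) to $\{0,1\}$), $(F,S)\leadsto^{\alpha,\beta}(F',S')$ means $(F',S')$ is reachable from $(F,S)$ in finitely many (possibly zero) transitions and $\beta(F',S')=1$. *)

From mathcomp Require Import all_boot.
Set Implicit Arguments. Unset Strict Implicit. Unset Printing Implicit Defensive.

Section AFDefs.
Variable T : finType.

(* An AF (A, R): A is a finite set of arguments; only attacks between
   elements of A count (R is implicitly restricted to A x A). *)
Record AF := MkAF { args : {set T}; att : rel T }.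

Definition attG (G : AF) (a b : T) : bool :=
  [&& a \in args G, b \in args G & att G a b].

Definition plus (G : AF) (S : {set T}) : {set T} :=
  [set a | [exists b in S, attG G b a]].
Definition minus (G : AF) (S : {set T}) : {set T} :=
  [set a | [exists b in S, attG G a b]].
Definition attacks_set (G : AF) (S S' : {set T}) : bool :=
  plus G S :&: S' != set0.

Definition conflict_free (G : AF) (S : {set T}) : bool :=
  [forall a in S, forall b in S, ~~ attG G a b].

Definition admissible (G : AF) (S : {set T}) : bool :=
  [&& S \subset args G, conflict_free G S &
     [forall a in S, forall b, attG G b a ==> [exists c in S, attG G c b]]].

Definition preferred (G : AF) (S : {set T}) : bool :=
  admissible G S &&
  [forall S' : {set T}, (admissible G S' && (S \subset S')) ==> (S' == S)].

Definition in_all_preferred (G : AF) (S : {set T}) : bool :=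
  [forall P : {set T}, preferred G P ==> (S \subset P)].
Definition ideal (G : AF) (S : {set T}) : bool :=
  [&& admissible G S, in_all_preferred G S &
     [forall S' : {set T},
        [&& admissible G S', in_all_preferred G S' & S \subset S'] ==> (S' == S)]].

Definition initial (G : AF) (S : {set T}) : bool :=
  [&& S != set0, admissible G S &
     [forall S' : {set T}, (S' \proper S) ==> ~~ ((S' != set0) && admissible G S')]].

Definition IS (G : AF) : {set {set T}} := [set S | initial G S].
Definition ISu (G : AF) : {set {set T}} := [set S in IS G | minus G S == set0].
Definition ISuc (G : AF) : {set {set T}} :=
  [set S in IS G | (minus G S != set0) &&
                   [forall S' in IS G, ~~ attacks_set G S' S]].
Definition ISc (G : AF) : {set {set T}} :=
  [set S in IS G | [exists S' in IS G, attacks_set G S' S]].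

Definition reduct (G : AF) (S : {set T}) : AF :=
  MkAF (args G :\: (S :|: plus G S)) (att G).

Definition selection := {set {set T}} -> {set {set T}} -> {set {set T}} -> {set {set T}}.
Definition termination := AF -> {set T} -> bool.

Definition trans (alpha : selection) (G : AF) (S : {set T}) (G' : AF) (S2 : {set T}) : Prop :=
  exists S' : {set T}, S' \in alpha (ISu G) (ISuc G) (ISc G) /\
    G' = reduct G S' /\ S2 = S :|: S'.

Inductive reach (alpha : selection) : AF -> {set T} -> AF -> {set T} -> Prop :=
| reach_refl G S : reach alpha G S G S
| reach_step G S G1 S1 G2 S2 :
    trans alpha G S G1 S1 -> reach alpha G1 S1 G2 S2 -> reach alpha G S G2 S2.

Definition leadsto (alpha : selection) (beta : termination)
  (F : AF) (S : {set T}) (F' : AF) (S' : {set T}) : Prop :=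
  reach alpha F S F' S' /\ beta F' S' = true.

Definition alpha0 : selection := fun X Y Z => X :|: Y.
Definition beta0 : termination := fun G S => (ISu G :|: ISuc G) == set0.

End AFDefs.

From mathcomp Require Import all_boot.
Set Implicit Arguments. Unset Strict Implicit. Unset Printing Implicit Defensive.

(* Along an alpha0-run from (F, {}), the accumulated set E stays admissible in
   F and the current framework is always the reduct F^E: reducts compose, and
   an admissible set of F^E added to E keeps it admissible in F.  So E extends
   to a preferred extension.  If an admissible set I contained in every
   preferred extension were not below E, then I \ E would be admissible in F^E
   and contain an initial set S of F^E.  Termination leaves S challenged by an
   initial set S'' of F^E; but E u S'' is admissible in F, hence lies in a
   preferred extension, which also contains I and thus S: a conflict. *)

Section Argumentation.
Variable T : finType.
Implicit Types (G : AF T) (A B S X : {set T}).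

Lemma plusP G S x : reflect (exists2 b, b \in S & attG G b x) (x \in plus G S).
Proof. by rewrite inE; apply: (iffP exists_inP) => -[b]; exists b. Qed.

Lemma attG_args G a b : attG G a b -> (a \in args G) && (b \in args G).
Proof. by case/and3P=> -> ->. Qed.

Lemma conflict_freeP G S :
  reflect {in S &, forall a b, ~~ attG G a b} (conflict_free G S).
Proof.
apply: (iffP forall_inP) => [cf a b aS bS|cf a aS].
  exact: (forall_inP (cf a aS) b bS).
by apply/forall_inP => b; apply: cf.
Qed.

Lemma conflict_freeS G A B : A \subset B -> conflict_free G B -> conflict_free G A.
Proof.
move=> /subsetP AB /conflict_freeP cfB; apply/conflict_freeP => a b aA bA.
by apply: cfB; apply: AB.
Qed.

Lemma admissibleP G S :
  reflect [/\ S \subset args G, conflict_free G S &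
             forall a b, a \in S -> attG G b a -> exists2 c, c \in S & attG G c b]
          (admissible G S).
Proof.
apply: (iffP and3P) => -[sub cf def]; split=> //.
  move=> a b aS ba; have /forall_inP/(_ a aS)/forallP/(_ b) := def.
  by rewrite ba => /exists_inP.
apply/forall_inP => a aS; apply/forallP => b; apply/implyP => ba.
by apply/exists_inP; apply: def ba.
Qed.

Lemma admissible_set0 G : admissible G set0.
Proof.
apply/admissibleP; split=> [||a b]; rewrite ?sub0set ?inE //.
by apply/conflict_freeP => a b; rewrite inE.
Qed.

Lemma initial_admissible G S : initial G S -> admissible G S.
Proof. by case/and3P. Qed.

Lemma ISE G : IS G = ISu G :|: ISuc G :|: ISc G.
Proof.
apply/setP => S; rewrite !inE.
case: (initial G S) => //=; case: (minus G S == set0) => //=.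
by rewrite -negb_exists_in orNb.
Qed.

Lemma admissible_sub_preferred G S :
  admissible G S -> exists P, preferred G P /\ S \subset P.
Proof.
move=> admS; pose Q := [pred X | admissible G X && (S \subset X)].
have QS : Q S by rewrite /= admS subxx.
case: (arg_maxnP (fun X : {set T} => #|X|) QS) => P /andP[admP SP] maxP.
exists P; split=> //; rewrite /preferred admP /=.
apply/forallP => P'; apply/implyP => /andP[admP' PP'].
by rewrite eq_sym eqEcard PP' /=; apply: maxP; rewrite /= admP' (subset_trans SP PP').
Qed.

Lemma admissible_sub_initial G X :
  admissible G X -> X != set0 -> exists2 S, initial G S & S \subset X.
Proof.
move=> admX X0; pose Q := [pred Y | [&& Y != set0, admissible G Y & Y \subset X]].
have QX : Q X by rewrite /= X0 admX subxx.
case: (arg_minnP (fun Y : {set T} => #|Y|) QX) => S /and3P[S0 admS SX] minS.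
exists S => //; rewrite /initial S0 admS /=.
apply/forall_inP => S' ltS'S; apply/negP => /andP[S'0 admS'].
have : #|S| <= #|S'|.
  by apply: minS; rewrite /= S'0 admS' (subset_trans (proper_sub ltS'S) SX).
by rewrite leqNgt proper_card.
Qed.

Lemma in_all_preferred_compatible G I S :
  in_all_preferred G I -> admissible G S -> conflict_free G (I :|: S).
Proof.
move=> /forall_inP allI /admissible_sub_preferred[P [prefP SP]].
have /andP[/admissibleP[_ cfP _] _] := prefP.
by apply: conflict_freeS cfP; rewrite subUset SP allI.
Qed.

Lemma in_reduct G S x :
  (x \in args (reduct G S)) = [&& x \in args G, x \notin S & x \notin plus G S].
Proof. by rewrite /= !inE negb_or andbC andbA. Qed.

Lemma attG_reduct G S a b :
  attG (reduct G S) a b =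
  [&& a \in args (reduct G S), b \in args (reduct G S) & attG G a b].
Proof. by rewrite /attG !in_reduct; case: (a \in args G); case: (b \in args G). Qed.

Lemma attG_reductW G S a b : attG (reduct G S) a b -> attG G a b.
Proof. by rewrite attG_reduct => /and3P[]. Qed.

Lemma reduct_set0 G : reduct G set0 = G.
Proof.
have plus0 : plus G set0 = set0.
  by apply/setP => x; rewrite in_set0; apply/plusP => -[b]; rewrite in_set0.
by case: G plus0 => A R; rewrite /reduct /= => ->; rewrite setU0 setD0.
Qed.

Lemma reductA G S S' :
  S' \subset args (reduct G S) -> reduct (reduct G S) S' = reduct G (S :|: S').
Proof.
move=> /subsetP sub; rewrite {1}/reduct; congr (MkAF _ _); apply/setP => x.
have plusS' : (x \in plus (reduct G S) S') =
              (x \in args (reduct G S)) && (x \in plus G S').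
  apply/plusP/andP => [[b bS' /[dup] + /attG_reductW]|[xR /plusP[b bS' ba]]].
    by rewrite attG_reduct => /and3P[_ -> _] ba; split=> //; apply/plusP; exists b.
  by exists b; rewrite // attG_reduct sub ?xR.
have plusU : (x \in plus G (S :|: S')) = (x \in plus G S) || (x \in plus G S').
  apply/plusP/orP => [[b]|[]/plusP[b bS ba]]; last 2 first.
  - by exists b; rewrite ?inE ?bS.
  - by exists b; rewrite ?inE ?bS ?orbT.
  by rewrite inE => /orP[] bS ba; [left|right]; apply/plusP; exists b.
rewrite in_setD in_setU plusS' in_reduct in_setD !in_setU plusU.
by case: (x \in args G); case: (x \in S); case: (x \in S');
  case: (x \in plus G S); case: (x \in plus G S').
Qed.

Lemma admissible_reduct_setU G S S' :
  admissible G S -> admissible (reduct G S) S' -> admissible G (S :|: S').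
Proof.
move=> /admissibleP[subS cfS defS] /admissibleP[/subsetP subS' cfS' defS'].
have inR x : x \in S' -> [&& x \in args G, x \notin S & x \notin plus G S].
  by move/subS'; rewrite in_reduct.
apply/admissibleP; split.
- rewrite subUset subS; apply/subsetP => x /inR /and3P[] //.
- apply/conflict_freeP => a b; rewrite !inE => /orP[aS|aS'] /orP[bS|bS'].
  + exact: (conflict_freeP _ _ cfS).
  + apply/negP => ab; have /and3P[_ _ /plusP[]] := inR _ bS'; by exists a.
  + apply/negP => ab; have [c cS cb] := defS b a bS ab.
    have /and3P[_ _ /plusP[]] := inR _ aS'; by exists c.
  + apply/negP => ab; have /conflict_freeP/(_ a b aS' bS') := cfS'.
    by rewrite attG_reduct !subS' ?ab.
- move=> a b; rewrite inE => /orP[aS|aS'] ba.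
  + by have [c cS cb] := defS a b aS ba; exists c; rewrite ?inE ?cS.
  have /andP[bG _] := attG_args ba.
  case bR: (b \in args (reduct G S)).
    have ba' : attG (reduct G S) b a by rewrite attG_reduct bR subS'.
    have [c cS' cb] := defS' a b aS' ba'.
    by exists c; rewrite ?inE ?cS' ?orbT // (attG_reductW cb).
  move/negbT: bR; rewrite in_reduct bG /= negb_and !negbK => /orP[bS|/plusP[c cS cb]].
    have /and3P[_ _ /plusP[]] := inR _ aS'; by exists b.
  by exists c; rewrite ?inE ?cS.
Qed.

Lemma admissible_reduct_setD G A B :
  admissible G A -> conflict_free G (A :|: B) -> admissible (reduct G B) (A :\: B).
Proof.
move=> /admissibleP[/subsetP subA cfA defA] /conflict_freeP cfAB.
have inR x : x \in A -> x \notin B -> x \in args (reduct G B).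
  move=> xA xB; rewrite in_reduct subA // xB /=.
  apply/plusP => -[b bB bx].
  by have := cfAB b x; rewrite !inE bB xA orbT bx => /(_ isT isT).
apply/admissibleP; split.
- by apply/subsetP => x; rewrite inE => /andP[xB xA]; apply: inR.
- apply: conflict_freeS (subsetDl A B) _; apply/conflict_freeP => a b aA bA.
  by rewrite attG_reduct; apply/negP => /and3P[_ _]; apply/negP/(conflict_freeP _ _ cfA).
- move=> a b; rewrite inE => /andP[_ aA] /[dup] + /attG_reductW ba.
  rewrite attG_reduct => /andP[bR _].
  have [c cA cb] := defA a b aA ba.
  have cB : c \notin B.
    apply: contraL bR => cB; rewrite in_reduct.
    by apply/and3P => -[_ _ /plusP[]]; exists c.
  by exists c; rewrite ?inE ?cB // attG_reduct inR ?bR.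
Qed.

Lemma reach_alpha0_reduct (F : AF T) S G E :
  reach (@alpha0 T) (reduct F S) S G E -> admissible F S ->
  G = reduct F E /\ admissible F E.
Proof.
move eqG0 : (reduct F S) => G0 r; elim: r eqG0 => {G0 S G E} [G0 S <- //|].
move=> G0 S G1 S1 G E [S' [inS' [-> ->]]] _ IH eqG0 admS; subst G0.
have admS' : admissible (reduct F S) S'.
  by move: inS'; rewrite !inE => /orP[] /andP[/and3P[_ ? _] _].
apply: IH; last exact: admissible_reduct_setU admS admS'.
by rewrite reductA //; case/admissibleP: admS'.
Qed.

Lemma in_all_preferred_sub_terminal (F : AF T) (E I : {set T}) :
  admissible F E -> beta0 (reduct F E) E ->
  admissible F I -> in_all_preferred F I -> I \subset E.
Proof.
move=> admE /eqP terminal admI allI; apply: contraT; rewrite -setD_eq0 => IE0.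
have admIE : admissible (reduct F E) (I :\: E).
  exact: admissible_reduct_setD admI (in_all_preferred_compatible allI admE).
have [S iS SIE] := admissible_sub_initial admIE IE0.
have : S \in ISc (reduct F E).
  by move: (ISE (reduct F E)); rewrite terminal set0U => <-; rewrite inE.
rewrite inE => /andP[_ /exists_inP[S'' ]]; rewrite inE => iS'' /set0Pn[y].
rewrite !inE => /andP[/exists_inP[b bS'' /attG_reductW bAy] yS].
have admES'' := admissible_reduct_setU admE (initial_admissible iS'').
have /conflict_freeP cf := in_all_preferred_compatible allI admES''.
have yI : y \in I by have := subsetP SIE y yS; rewrite inE => /andP[].
by have := cf b y; rewrite !inE bS'' yI !orbT bAy => /(_ isT isT).
Qed.

End Argumentation.

Theorem theorem10 (T : finType) (F : AF T) (E : {set T}) :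
  (exists F' : AF T, leadsto (@alpha0 T) (@beta0 T) F set0 F' E) ->
  (exists E' : {set T}, preferred F E' /\ E \subset E') /\
  (forall Eid : {set T}, ideal F Eid -> Eid \subset E).
Proof.
move=> [G [r terminal]].
rewrite -{1}(reduct_set0 F) in r.
have [eqG admE] := reach_alpha0_reduct r (admissible_set0 F).
rewrite eqG in terminal.
split; first exact: admissible_sub_preferred.
move=> I /and3P[admI allI _].
exact: in_all_preferred_sub_terminal admE terminal admI allI.
Qed.
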